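(* Let $\mathcal I$ be $\mathcal I_\omega$ or $\mathcal I_0$. For every set $\Gamma\subseteq\mathbb T(\Sigma)$ and every $t\in\mathbb T(\Sigma)$: $\Gamma\Vdash_{\mathcal I}t$ if and only if $\Gamma\vdash_{\mathcal I}t$.
   Context: Illative systems. Fix a finite set $\mathcal B$ of base types and a set $\Sigma$ of primitive constants containing $\Xi$, $L$ and $A_\tau$ for each $\tau\in\mathcal B$. $\mathbb T(\Sigma)$ is the set of type-free lambda-terms over $\Sigma$. Abbreviations: $I=\lambda x.x$, $K=\lambda xy.x$, $H=\lambda x.L(Kx)$, $\supset\;=\lambda xy.\Xi(Kx)(Ky)$ (infix, right-associative), $F=\lambda xyf.\Xi x(\lambda z.y(fz))$. Judgements are $\Gamma\vdash t$ with $\Gamma$ finite. $\mathcal I_\omega$ has axioms $\Gamma,t\vdash t$; $\Gamma\vdash LH$; $\Gamma\vdash LA_\tau$ ($\tau\in\mathcal B$); and rules: (Eq) from $\Gamma\vdash t_1$ and $t_1=_{\beta\eta}t_2$ infer $\Gamma\vdash t_2$; ($H_i$) from $\Gamma\vdash t$ infer $\Gamma\vdash Ht$; ($\Xi_e$) from $\Gamma\vdash\Xi t_1t_2$ and $\Gamma\vdash t_1t_3$ infer $\Gamma\vdash t_2t_3$; ($\Xi_i$) from $\Gamma,t_1x\vdash t_2x$ and $\Gamma\vdash Lt_1$ infer $\Gamma\vdash\Xi t_1t_2$; ($\Xi_H$) from $\Gamma,t_1x\vdash H(t_2x)$ and $\Gamma\vdash Lt_1$ infer $\Gamma\vdash H(\Xi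 t_1t_2)$; ($F_L$) from $\Gamma,t_1x\vdash Lt_2$ and $\Gamma\vdash Lt_1$ infer $\Gamma\vdash L(Ft_1t_2)$; in the last three $x\notin FV(\Gamma,t_1,t_2)$. $\mathcal I_0$ is $\mathcal I_\omega$ without $F_L$. For arbitrary $\Gamma$, $\Gamma\vdash_{\mathcal I}t$ means some finite $\Gamma'\subseteq\Gamma$ has $\Gamma'\vdash t$ derivable in $\mathcal I$. A combinatory algebra is $\langle C,\cdot,S,K\rangle$ with $SXYZ=XZ(YZ)$, $KXY=X$; extensional if $M_1X=M_2X$ for all $X$ implies $M_1=M_2$. An illative Kripke pre-model is $\langle\mathcal S,\le,\mathcal C,I,\varsigma\rangle$: $\le$ a partial order on states $\mathcal S$, $\mathcal C$ an extensional combinatory algebra, $I:\Sigma\to\mathcal C$, $\varsigma$ assigns to each element of $\mathcal C$ an upward-closed subset of $\mathcal S$. For a valuation $u$ (variables to $\mathcal C$): $[\![x]\!]_u=u(x)$, $[\![c]\!]_u=I(c)$, $[\![t_1t_2]\!]_u=[\![t_1]\!]_u\cdot[\![t_2]\!]_u$, $[\![\lambda x.t]\!]_u$ the unique $d$ with $d\cdot d'=[\![t]\!]_{u[x/d']}$ for all $d'$. An illative Kripke model for $\mathcal I_\omega$ is a pre-model such that for all $X,Y\in\mathcal C$, $s\in\mathcal S$ (writing $\Xi,L,H,F,A_\tau$ for their values): (1) if $s\in\varsigma(LX)$ and for all $s'\ge s$, $Z\in\mathcal C$ with $s'\in\varsigma(XZ)$ we have $s'\in\varsigma(YZ)$, then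 $s\in\varsigma(\Xi XY)$; (2) if $s\in\varsigma(\Xi XY)$ then for all $Z$ with $s\in\varsigma(XZ)$, $s\in\varsigma(YZ)$; (3) if $s\in\varsigma(LX)$ and for all $s'\ge s$, $Z$ with $s'\in\varsigma(XZ)$ we have $s'\in\varsigma(H(YZ))$, then $s\in\varsigma(H(\Xi XY))$; (4) if $s\in\varsigma(LX)$ and for all $s'\ge s$ such that $s'\in\varsigma(XZ)$ for some $Z$ we have $s'\in\varsigma(LY)$, then $s\in\varsigma(L(FXY))$; (5) $s\in\varsigma(X)$ implies $s\in\varsigma(HX)$; (6) $s\in\varsigma(LH)$; (7) $s\in\varsigma(LA_\tau)$ for $\tau\in\mathcal B$. For $\mathcal I_0$ omit (4). Write $s,u\Vdash_{\mathcal M}t$ iff $s\in\varsigma([\![t]\!]_u)$. $\Gamma\Vdash_{\mathcal I}t$ means: for every illative Kripke model $\mathcal M$ for $\mathcal I$, state $s$ and valuation $u$ with $s,u\Vdash_{\mathcal M}t'$ for all $t'\in\Gamma$, we have $s,u\Vdash_{\mathcal M}t$. *)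

From Stdlib Require Import List Relations ClassicalEpsilon FinFun.

Set Implicit Arguments.

Definition scons {A : Type} (d : A) (u : nat -> A) : nat -> A :=
  fun n => match n with 0 => d | S n => u n end.

Section Illative.

(* B : the set of base types; Oth : the primitive constants of Sigma other
   than Xi, L and the A_tau. *)
Variables (B Oth : Type).

Inductive const : Type :=
| CXi : const
| CL : const
| CA : B -> const
| COther : Oth -> const.

(* Type-free lambda terms over Sigma, de Bruijn indices.  Free variables are
   the indices that are not bound. *)
Inductive term : Type :=
| Var : nat -> term
| Cst : const -> term
| App : term -> term -> term
| Lam : term -> term.

Definition upren (r : nat -> nat) : nat -> nat :=
  fun n => match n with 0 => 0 | S n => S (r n) end.

Fixpoint ren (r : nat -> nat) (t : term) : term :=
  match t with
  | Var n => Var (r n)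
  | Cst c => Cst c
  | App t1 t2 => App (ren r t1) (ren r t2)
  | Lam t => Lam (ren (upren r) t)
  end.

Definition up (s : nat -> term) : nat -> term :=
  fun n => match n with 0 => Var 0 | S n => ren S (s n) end.

Fixpoint sub (s : nat -> term) (t : term) : term :=
  match t with
  | Var n => s n
  | Cst c => Cst c
  | App t1 t2 => App (sub s t1) (sub s t2)
  | Lam t => Lam (sub (up s) t)
  end.

Inductive step : term -> term -> Prop :=
| step_beta t s : step (App (Lam t) s) (sub (scons s Var) t)
| step_eta t : step (Lam (App (ren S t) (Var 0))) t
| step_app1 t1 t1' t2 : step t1 t1' -> step (App t1 t2) (App t1' t2)
| step_app2 t1 t2 t2' : step t2 t2' -> step (App t1 t2) (App t1 t2')
| step_lam t t' : step t t' -> step (Lam t) (Lam t').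

Definition beq : term -> term -> Prop := clos_refl_sym_trans term step.

Fixpoint occurs (x : nat) (t : term) : Prop :=
  match t with
  | Var n => n = x
  | Cst _ => False
  | App t1 t2 => occurs x t1 \/ occurs x t2
  | Lam t => occurs (S x) t
  end.

Definition tXi : term := Cst CXi.
Definition tL : term := Cst CL.
Definition tA (tau : B) : term := Cst (CA tau).
Definition tI : term := Lam (Var 0).
Definition tK : term := Lam (Lam (Var 1)).
Definition tH : term := Lam (App tL (App tK (Var 0))).
Definition tImp : term :=
  Lam (Lam (App (App tXi (App tK (Var 1))) (App tK (Var 0)))).
Definition tF : term :=
  Lam (Lam (Lam (App (App tXi (Var 2))
                      (Lam (App (Var 2) (App (Var 1) (Var 0))))))).

(* Derivability in I_omega (omega = true) or I_0 (omega = false);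
   finite contexts are lists. *)
Inductive deriv (omega : bool) : list term -> term -> Prop :=
| d_ax G t : In t G -> deriv omega G t
| d_LH G : deriv omega G (App tL tH)
| d_LA G tau : deriv omega G (App tL (tA tau))
| d_Eq G t1 t2 : deriv omega G t1 -> beq t1 t2 -> deriv omega G t2
| d_Hi G t : deriv omega G t -> deriv omega G (App tH t)
| d_Xie G t1 t2 t3 :
    deriv omega G (App (App tXi t1) t2) -> deriv omega G (App t1 t3) ->
    deriv omega G (App t2 t3)
| d_Xii G t1 t2 x :
    (forall t, In t G -> ~ occurs x t) -> ~ occurs x t1 -> ~ occurs x t2 ->
    deriv omega (App t1 (Var x) :: G) (App t2 (Var x)) ->
    deriv omega G (App tL t1) ->
    deriv omega G (App (App tXi t1) t2)
| d_XiH G t1 t2 x :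
    (forall t, In t G -> ~ occurs x t) -> ~ occurs x t1 -> ~ occurs x t2 ->
    deriv omega (App t1 (Var x) :: G) (App tH (App t2 (Var x))) ->
    deriv omega G (App tL t1) ->
    deriv omega G (App tH (App (App tXi t1) t2))
| d_FL G t1 t2 x :
    omega = true ->
    (forall t, In t G -> ~ occurs x t) -> ~ occurs x t1 -> ~ occurs x t2 ->
    deriv omega (App t1 (Var x) :: G) (App tL t2) ->
    deriv omega G (App tL t1) ->
    deriv omega G (App tL (App (App tF t1) t2)).

Definition prov (omega : bool) (Gamma : term -> Prop) (t : term) : Prop :=
  exists G : list term, (forall t', In t' G -> Gamma t') /\ deriv omega G t.

Record comb_alg : Type := {
  ca_car :> Type;
  ca_app : ca_car -> ca_car -> ca_car;
  ca_S : ca_car;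
  ca_K : ca_car;
  ca_Sax : forall X Y Z,
    ca_app (ca_app (ca_app ca_S X) Y) Z = ca_app (ca_app X Z) (ca_app Y Z);
  ca_Kax : forall X Y, ca_app (ca_app ca_K X) Y = X
}.

Definition extensional (C : comb_alg) : Prop :=
  forall M1 M2 : C, (forall X : C, ca_app C M1 X = ca_app C M2 X) -> M1 = M2.

Record premodel : Type := {
  pm_state : Type;
  pm_le : pm_state -> pm_state -> Prop;
  pm_le_refl : forall s, pm_le s s;
  pm_le_trans : forall s1 s2 s3, pm_le s1 s2 -> pm_le s2 s3 -> pm_le s1 s3;
  pm_le_antisym : forall s1 s2, pm_le s1 s2 -> pm_le s2 s1 -> s1 = s2;
  pm_alg : comb_alg;
  pm_ext : extensional pm_alg;
  pm_I : const -> pm_alg;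
  pm_vs : pm_alg -> pm_state -> Prop;
  pm_vs_up : forall X s s', pm_le s s' -> pm_vs X s -> pm_vs X s'
}.

Section Sem.
Variable M : premodel.
Local Notation C := (pm_alg M).
Local Notation "a · b" := (ca_app C a b) (at level 40, left associativity).

(* [[t]]_u ; for lambda: the (unique, by extensionality) d with
   d . d' = [[t]]_{u[x/d']} for all d' *)
Fixpoint den (t : term) (u : nat -> C) {struct t} : C :=
  match t with
  | Var n => u n
  | Cst c => pm_I M c
  | App t1 t2 => den t1 u · den t2 u
  | Lam t0 =>
      epsilon (inhabits (ca_K C))
        (fun d => forall d' : C, d · d' = den t0 (scons d' u))
  end.

(* values of the closed abbreviations (independent of the valuation) *)
Definition u0 : nat -> C := fun _ => ca_K C.
Definition vXi : C := pm_I M CXi.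
Definition vL : C := pm_I M CL.
Definition vA (tau : B) : C := pm_I M (CA tau).
Definition vH : C := den tH u0.
Definition vF : C := den tF u0.

Definition vs (X : C) (s : pm_state M) : Prop := pm_vs M X s.

Definition is_model (omega : bool) : Prop :=
  (forall (X Y : C) s, vs (vL · X) s ->
     (forall s', pm_le M s s' -> forall Z, vs (X · Z) s' -> vs (Y · Z) s') ->
     vs (vXi · X · Y) s) /\
  (forall (X Y : C) s, vs (vXi · X · Y) s ->
     forall Z, vs (X · Z) s -> vs (Y · Z) s) /\
  (forall (X Y : C) s, vs (vL · X) s ->
     (forall s', pm_le M s s' -> forall Z, vs (X · Z) s' -> vs (vH · (Y · Z)) s') ->
     vs (vH · (vXi · X · Y)) s) /\
  (omega = true ->
   forall (X Y : C) s, vs (vL · X) s ->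
     (forall s', pm_le M s s' -> (exists Z, vs (X · Z) s') -> vs (vL · Y) s') ->
     vs (vL · (vF · X · Y)) s) /\
  (forall (X : C) s, vs X s -> vs (vH · X) s) /\
  (forall s, vs (vL · vH) s) /\
  (forall s tau, vs (vL · vA tau) s).

Definition forces (s : pm_state M) (u : nat -> C) (t : term) : Prop :=
  vs (den t u) s.

End Sem.

Definition sem_conseq (omega : bool) (Gamma : term -> Prop) (t : term) : Prop :=
  forall M : premodel, is_model M omega ->
  forall (s : pm_state M) (u : nat -> pm_alg M),
    (forall t', Gamma t' -> forces M s u t') -> forces M s u t.

End Illative.

(* Soundness is proved by induction on derivations, after showing that the
   denotation of a term is well behaved: lambda-abstraction is interpreted by
   bracket abstraction in the combinatory algebra, hence denotations commute
   with substitution and are invariant under beta-eta conversion.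

   Completeness uses a single canonical model.  Its combinatory algebra is the
   set of beta-eta classes of terms (extensional thanks to eta); its states
   are the "sparse" sets of terms, i.e. those that leave unboundedly many
   variables fresh, ordered by inclusion; a class is forced at a state when a
   representative is derivable from the state.  Sparseness supplies the
   eigenvariables needed to validate conditions (1), (3) and (4).  Finally an
   arbitrary context Gamma is made sparse by renaming variable n to 2n, which
   derivability undoes by renaming back. *)
From Stdlib Require Import List Relations ClassicalEpsilon FinFun Lia Arith.
From Stdlib Require Import FunctionalExtensionality PropExtensionality ProofIrrelevance.
Set Implicit Arguments.
Arguments Var {B Oth} _.
Arguments tXi {B Oth}.
Arguments tL {B Oth}.
Arguments tH {B Oth}.
Arguments tK {B Oth}.
Arguments tF {B Oth}.

Section Syntax.
Variables B Oth : Type.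
Notation term := (term B Oth).

Lemma ren_ext (r1 r2 : nat -> nat) (t : term) :
  (forall n, r1 n = r2 n) -> ren r1 t = ren r2 t.
Proof.
  revert r1 r2; induction t; intros r1 r2 H; simpl; f_equal; auto.
  apply IHt. intros [|n]; simpl; auto.
Qed.

Lemma sub_occ (s1 s2 : nat -> term) (t : term) :
  (forall n, occurs n t -> s1 n = s2 n) -> sub s1 t = sub s2 t.
Proof.
  revert s1 s2; induction t; intros s1 s2 H; simpl in *; f_equal; auto.
  apply IHt. intros [|n] Hn; simpl; auto. f_equal. apply H. exact Hn.
Qed.

Lemma sub_ext (s1 s2 : nat -> term) (t : term) :
  (forall n, s1 n = s2 n) -> sub s1 t = sub s2 t.
Proof. intros H; apply sub_occ; auto. Qed.

Lemma ren_ren r1 r2 (t : term) : ren r1 (ren r2 t) = ren (fun n => r1 (r2 n)) t.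
Proof.
  revert r1 r2; induction t; intros; simpl; f_equal; auto.
  rewrite IHt. apply ren_ext. intros [|n]; reflexivity.
Qed.

Lemma ren_as_sub r (t : term) : ren r t = sub (fun n => Var (r n)) t.
Proof.
  revert r; induction t; intros; simpl; f_equal; auto.
  rewrite IHt. apply sub_ext. intros [|n]; reflexivity.
Qed.

Lemma sub_ren s r (t : term) : sub s (ren r t) = sub (fun n => s (r n)) t.
Proof.
  revert s r; induction t; intros; simpl; f_equal; auto.
  rewrite IHt. apply sub_ext. intros [|n]; reflexivity.
Qed.

Lemma ren_sub r s (t : term) : ren r (sub s t) = sub (fun n => ren r (s n)) t.
Proof.
  revert s r; induction t; intros; simpl; f_equal; auto.
  rewrite IHt. apply sub_ext. intros [|n]; simpl; auto.
  rewrite !ren_ren. apply ren_ext. reflexivity.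
Qed.

Lemma sub_sub s1 s2 (t : term) :
  sub s1 (sub s2 t) = sub (fun n => sub s1 (s2 n)) t.
Proof.
  revert s1 s2; induction t; intros; simpl; f_equal; auto.
  rewrite IHt. apply sub_ext. intros [|n]; simpl; auto.
  rewrite sub_ren, ren_sub. apply sub_ext. reflexivity.
Qed.

Lemma sub_id (t : term) : sub Var t = t.
Proof.
  induction t; simpl; f_equal; auto.
  rewrite <- IHt at 2. apply sub_ext. intros [|n]; reflexivity.
Qed.

Lemma ren_cancel (r r' : nat -> nat) (t : term) :
  (forall n, r' (r n) = n) -> ren r' (ren r t) = t.
Proof.
  intros H. rewrite ren_ren, ren_as_sub. rewrite <- (sub_id t) at 2.
  apply sub_ext. intros n. rewrite H. reflexivity.
Qed.

Lemma occurs_ren r v (t : term) :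
  occurs v (ren r t) -> exists n, occurs n t /\ v = r n.
Proof.
  revert r v; induction t; simpl; intros r v H.
  - eauto.
  - destruct H.
  - destruct H as [H|H]; [destruct (IHt1 _ _ H) as [n [? ?]]
                         |destruct (IHt2 _ _ H) as [n [? ?]]]; eauto.
  - destruct (IHt _ _ H) as [[|n] [H1 H2]]; simpl in H2; [discriminate|].
    injection H2; intros; subst; eauto.
Qed.

Lemma step_sub s (t t' : term) : step t t' -> step (sub s t) (sub s t').
Proof.
  intros H; revert s; induction H; intros; simpl.
  - replace (sub s0 (sub (scons s Var) t))
      with (sub (scons (sub s0 s) Var) (sub (up s0) t)).
    + constructor.
    + rewrite !sub_sub. apply sub_ext. intros [|n]; simpl; auto.
      rewrite sub_ren. apply sub_id.
  - replace (sub (up s) (ren S t)) with (ren S (sub s t)).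
    + constructor.
    + rewrite sub_ren, ren_sub. apply sub_ext. reflexivity.
  - constructor; auto.
  - constructor; auto.
  - constructor; auto.
Qed.

Lemma beq_map (f : term -> term) :
  (forall a b, step a b -> step (f a) (f b)) ->
  forall a b, beq a b -> beq (f a) (f b).
Proof.
  intros Hf a b H; induction H.
  - apply rst_step; auto.
  - apply rst_refl.
  - apply rst_sym; auto.
  - eapply rst_trans; eauto.
Qed.

Lemma beq_sub s (a b : term) : beq a b -> beq (sub s a) (sub s b).
Proof. apply beq_map. intros; apply step_sub; auto. Qed.

Lemma beq_app (a a' b b' : term) :
  beq a a' -> beq b b' -> beq (App a b) (App a' b').
Proof.
  intros H1 H2. apply rst_trans with (App a' b).
  - apply (beq_map (fun x => App x b)); auto. intros; constructor; auto.
  - apply (beq_map (fun x => App a' x)); auto. intros; constructor; auto.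
Qed.

Lemma beq_lam (a b : term) : beq a b -> beq (Lam a) (Lam b).
Proof. apply beq_map. intros; constructor; auto. Qed.

Lemma beq_beta (t s : term) : beq (App (Lam t) s) (sub (scons s Var) t).
Proof. apply rst_step. constructor. Qed.

Fixpoint bound (t : term) : nat :=
  match t with
  | Var n => S n
  | Cst _ => 0
  | App a b => max (bound a) (bound b)
  | Lam a => pred (bound a)
  end.

Lemma occurs_bound n (t : term) : occurs n t -> n < bound t.
Proof.
  revert n; induction t; simpl; intros m H.
  - lia.
  - destruct H.
  - destruct H as [H|H]; [apply IHt1 in H|apply IHt2 in H]; lia.
  - apply IHt in H. lia.
Qed.

Definition lbound (l : list term) : nat :=
  fold_right (fun t n => max (bound t) n) 0 l.

Lemma fresh_above (l : list term) v :
  lbound l <= v -> forall t, In t l -> ~ occurs v t.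
Proof.
  induction l as [|a l IH]; simpl; intros Hv t Ht Ho; [exact Ht|].
  destruct Ht as [<-|Ht].
  - apply occurs_bound in Ho. lia.
  - apply (IH ltac:(lia) t Ht Ho).
Qed.

End Syntax.

Section Derivations.
Variables B Oth : Type.
Notation term := (term B Oth).
Variable om : bool.

Lemma fresh_var (l : list term) : exists v, forall t, In t l -> ~ occurs v t.
Proof. exists (lbound l). apply fresh_above; auto. Qed.

Definition updt (s : nat -> term) x y : nat -> term :=
  fun n => if Nat.eqb n x then Var y else s n.

Lemma sub_updt_fresh s x y (t : term) :
  ~ occurs x t -> sub (updt s x y) t = sub s t.
Proof.
  intros H. apply sub_occ. intros n Hn. unfold updt.
  destruct (Nat.eqb_spec n x); subst; tauto.
Qed.

Lemma updt_eq s x y : updt s x y x = Var y.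
Proof. unfold updt. rewrite Nat.eqb_refl. reflexivity. Qed.

Lemma eigen_context s x y (G G' : list term) t1 :
  (forall t, In t G -> ~ occurs x t) -> ~ occurs x t1 ->
  (forall t, In t G -> In (sub s t) G') ->
  forall t, In t (App t1 (Var x) :: G) ->
    In (sub (updt s x y) t) (App (sub s t1) (Var y) :: G').
Proof.
  intros HG Ht1 HGG' t [<-|Ht]; simpl.
  - left. rewrite sub_updt_fresh, updt_eq by auto. reflexivity.
  - right. rewrite sub_updt_fresh by auto. auto.
Qed.

(* Derivability is closed under substitution; eigenvariables are renamed
   apart from the substituted terms. *)
Lemma deriv_sub G (t : term) : deriv om G t ->
  forall s G', (forall t', In t' G -> In (sub s t') G') -> deriv om G' (sub s t).
Proof.
  induction 1 as [G t Ht|G|G tau|G t1 t2 D IH Hb|G t D IH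
                 |G t1 t2 t3 D1 IH1 D2 IH2
                 |G t1 t2 x HG Hx1 Hx2 D1 IH1 D2 IH2
                 |G t1 t2 x HG Hx1 Hx2 D1 IH1 D2 IH2
                 |G t1 t2 x Hom HG Hx1 Hx2 D1 IH1 D2 IH2];
    intros s G' HGG'; simpl.
  - apply d_ax; auto.
  - apply d_LH.
  - apply d_LA.
  - apply d_Eq with (sub s t1); auto. apply beq_sub; auto.
  - apply d_Hi. auto.
  - eapply d_Xie; [apply (IH1 s G' HGG')|apply (IH2 s G' HGG')].
  - destruct (fresh_var (sub s t1 :: sub s t2 :: G')) as [y Hy].
    apply d_Xii with y; try (intros; apply Hy; simpl; auto; fail); auto.
    + specialize (IH1 _ _ (eigen_context s y G' HG Hx1 HGG')).
      simpl in IH1. rewrite sub_updt_fresh, updt_eq in IH1 by auto. exact IH1.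
    + apply (IH2 s G' HGG').
  - destruct (fresh_var (sub s t1 :: sub s t2 :: G')) as [y Hy].
    apply d_XiH with y; try (intros; apply Hy; simpl; auto; fail); auto.
    + specialize (IH1 _ _ (eigen_context s y G' HG Hx1 HGG')).
      simpl in IH1. rewrite sub_updt_fresh, updt_eq in IH1 by auto. exact IH1.
    + apply (IH2 s G' HGG').
  - destruct (fresh_var (sub s t1 :: sub s t2 :: G')) as [y Hy].
    apply d_FL with y; try (intros; apply Hy; simpl; auto; fail); auto.
    + specialize (IH1 _ _ (eigen_context s y G' HG Hx1 HGG')).
      simpl in IH1. rewrite sub_updt_fresh in IH1 by auto. exact IH1.
    + apply (IH2 s G' HGG').
Qed.

Lemma deriv_weak G G' (t : term) : deriv om G t -> incl G G' -> deriv om G' t.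
Proof.
  intros D Hi. rewrite <- (sub_id t). apply (deriv_sub D).
  intros t' Ht'. rewrite sub_id. auto.
Qed.

Lemma deriv_ren r G (t : term) :
  deriv om G t -> deriv om (map (ren r) G) (ren r t).
Proof.
  intros D. rewrite ren_as_sub. apply (deriv_sub D).
  intros t' Ht'. rewrite <- ren_as_sub. apply in_map; auto.
Qed.

End Derivations.

Section Denotation.
Variables B Oth : Type.
Notation term := (term B Oth).
Variable M : premodel B Oth.
Notation C := (pm_alg M).
Notation "a · b" := (ca_app C a b) (at level 40, left associativity).

(* Applicative polynomials over C with variables; bracket abstraction of
   variable 0 shows that every lambda-term has a denotation satisfying the
   beta law (combinatory completeness). *)
Inductive poly := PVar (n : nat) | PCst (c : C) | PApp (a b : poly).

Fixpoint peval (p : poly) (u : nat -> C) : C :=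
  match p with
  | PVar n => u n
  | PCst c => c
  | PApp a b => peval a u · peval b u
  end.

Fixpoint abstract (p : poly) : poly :=
  match p with
  | PVar 0 => PApp (PApp (PCst (ca_S C)) (PCst (ca_K C))) (PCst (ca_K C))
  | PVar (S n) => PApp (PCst (ca_K C)) (PVar n)
  | PCst c => PApp (PCst (ca_K C)) (PCst c)
  | PApp a b => PApp (PApp (PCst (ca_S C)) (abstract a)) (abstract b)
  end.

Lemma abstract_spec p u d : peval (abstract p) u · d = peval p (scons d u).
Proof.
  induction p as [[|n]|c|a IHa b IHb]; simpl.
  - rewrite ca_Sax, !ca_Kax. reflexivity.
  - apply ca_Kax.
  - apply ca_Kax.
  - rewrite ca_Sax, IHa, IHb. reflexivity.
Qed.

Lemma den_var n u : den M (Var n) u = u n.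
Proof. reflexivity. Qed.

Lemma den_app (a b : term) u : den M (App a b) u = den M a u · den M b u.
Proof. reflexivity. Qed.

Fixpoint compile (t : term) : poly :=
  match t with
  | Var n => PVar n
  | Cst c => PCst (pm_I M c)
  | App a b => PApp (compile a) (compile b)
  | Lam a => abstract (compile a)
  end.

(* By extensionality, the chosen denotation of an abstraction is the one
   built by bracket abstraction. *)
Lemma den_compile (t : term) u : den M t u = peval (compile t) u.
Proof.
  revert u; induction t; intros u; simpl; try reflexivity.
  - rewrite IHt1, IHt2; reflexivity.
  - match goal with |- epsilon ?i ?P = _ =>
      assert (HP : P (peval (abstract (compile t)) u)) by
        (intros d; rewrite abstract_spec, IHt; reflexivity);
      pose proof (epsilon_spec i P (ex_intro _ _ HP)) as HE end.
    apply (pm_ext M). intros d. rewrite HE, HP. reflexivity.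
Qed.

Lemma den_lam (t : term) u d : den M (Lam t) u · d = den M t (scons d u).
Proof. rewrite !den_compile. apply abstract_spec. Qed.

Lemma den_lam_ext (t : term) u e :
  (forall d, e · d = den M t (scons d u)) -> den M (Lam t) u = e.
Proof. intros H. apply (pm_ext M). intros d. rewrite den_lam, H. reflexivity. Qed.

Lemma den_occ (t : term) u v :
  (forall n, occurs n t -> u n = v n) -> den M t u = den M t v.
Proof.
  revert u v; induction t; intros u v H; simpl in H.
  - apply H; reflexivity.
  - reflexivity.
  - simpl. rewrite (IHt1 u v), (IHt2 u v); auto.
  - apply den_lam_ext. intros d. rewrite den_lam. apply IHt.
    intros [|n] Hn; simpl; auto. symmetry. apply H. exact Hn.
Qed.

Lemma den_ext (t : term) u v : (forall n, u n = v n) -> den M t u = den M t v.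
Proof. intros; apply den_occ; auto. Qed.

Lemma den_ren r (t : term) u : den M (ren r t) u = den M t (fun n => u (r n)).
Proof.
  revert r u; induction t; intros r u; try reflexivity.
  - simpl. rewrite IHt1, IHt2; auto.
  - apply den_lam_ext. intros d. rewrite den_lam, IHt. apply den_ext.
    intros [|n]; reflexivity.
Qed.

Lemma den_sub s (t : term) u :
  den M (sub s t) u = den M t (fun n => den M (s n) u).
Proof.
  revert s u; induction t; intros s u; try reflexivity.
  - simpl. rewrite IHt1, IHt2; auto.
  - apply den_lam_ext. intros d. rewrite den_lam, IHt. apply den_ext.
    intros [|n]; simpl; auto. rewrite den_ren. reflexivity.
Qed.

Lemma den_step (t t' : term) : step t t' -> forall u, den M t u = den M t' u.
Proof.
  induction 1; intros u.
  - change (den M (App (Lam t) s) u) with (den M (Lam t) u · den M s u).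
    rewrite den_lam, den_sub. apply den_ext. intros [|n]; reflexivity.
  - apply den_lam_ext. intros d. simpl. rewrite den_ren. reflexivity.
  - simpl. rewrite IHstep; auto.
  - simpl. rewrite IHstep; auto.
  - apply den_lam_ext. intros d. rewrite den_lam. auto.
Qed.

Lemma den_beq (t t' : term) : beq t t' -> forall u, den M t u = den M t' u.
Proof.
  induction 1 as [a b H|a|a b H IH|a b c H1 IH1 H2 IH2]; intros u; auto.
  - apply den_step; auto.
  - rewrite IH1; auto.
Qed.

Lemma den_closed (t : term) u v :
  (forall n, ~ occurs n t) -> den M t u = den M t v.
Proof. intros H. apply den_occ. intros n Hn. destruct (H n Hn). Qed.

Lemma den_tH u : den M tH u = vH M.
Proof. apply den_closed. simpl. lia. Qed.

Lemma den_tF u : den M tF u = vF M.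
Proof. apply den_closed. simpl. lia. Qed.

End Denotation.

Section Soundness.
Variables B Oth : Type.
Notation term := (term B Oth).
Variable M : premodel B Oth.
Notation C := (pm_alg M).
Notation "a · b" := (ca_app C a b) (at level 40, left associativity).

Definition updv (u : nat -> C) x Z : nat -> C :=
  fun n => if Nat.eqb n x then Z else u n.

Lemma den_updv_fresh u x Z (t : term) :
  ~ occurs x t -> den M t (updv u x Z) = den M t u.
Proof.
  intros H. apply den_occ. intros n Hn. unfold updv.
  destruct (Nat.eqb_spec n x); subst; tauto.
Qed.

Lemma updv_eq u x Z : updv u x Z x = Z.
Proof. unfold updv. rewrite Nat.eqb_refl. reflexivity. Qed.

Lemma forces_eigen_context s s' u x Z (G : list term) t1 :
  pm_le M s s' -> (forall t, In t G -> ~ occurs x t) -> ~ occurs x t1 ->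
  (forall t, In t G -> forces M s u t) -> vs M (den M t1 u · Z) s' ->
  forall t, In t (App t1 (Var x) :: G) -> forces M s' (updv u x Z) t.
Proof.
  intros Hle HG Hx1 HGs HZ t [<-|Ht]; unfold forces; simpl.
  - rewrite updv_eq, den_updv_fresh by auto. exact HZ.
  - rewrite den_updv_fresh by auto.
    apply (pm_vs_up M _ s s'); auto. apply HGs, Ht.
Qed.

Lemma soundness om G (t : term) : deriv om G t -> is_model M om ->
  forall s u, (forall t', In t' G -> forces M s u t') -> forces M s u t.
Proof.
  intros D [H1 [H2 [H3 [H4 [H5 [H6 H7]]]]]].
  induction D as [G t Ht|G|G tau|G t1 t2 D IH Hb|G t D IH
                 |G t1 t2 t3 D1 IH1 D2 IH2
                 |G t1 t2 x HG Hx1 Hx2 D1 IH1 D2 IH2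
                 |G t1 t2 x HG Hx1 Hx2 D1 IH1 D2 IH2
                 |G t1 t2 x Hom HG Hx1 Hx2 D1 IH1 D2 IH2];
    intros s u HGs; unfold forces in *; rewrite ?den_app.
  - auto.
  - rewrite den_tH. apply H6.
  - apply H7.
  - rewrite <- (den_beq M Hb). auto.
  - rewrite den_tH. apply H5. auto.
  - apply (H2 (den M t1 u)); [apply IH1|apply IH2]; auto.
  - apply H1; [apply IH2; auto|].
    intros s' Hle Z HZ.
    specialize (IH1 s' _ (forces_eigen_context _ _ _ _ Hle HG Hx1 HGs HZ)).
    rewrite !den_app, den_var, updv_eq, den_updv_fresh in IH1 by auto. exact IH1.
  - rewrite den_tH. apply H3; [apply IH2; auto|].
    intros s' Hle Z HZ.
    specialize (IH1 s' _ (forces_eigen_context _ _ _ _ Hle HG Hx1 HGs HZ)).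
    rewrite !den_app, den_var, den_tH, updv_eq, den_updv_fresh in IH1 by auto.
    exact IH1.
  - rewrite den_tF. apply H4; auto; [apply IH2; auto|].
    intros s' Hle [Z HZ].
    specialize (IH1 s' _ (forces_eigen_context _ _ _ _ Hle HG Hx1 HGs HZ)).
    rewrite !den_app, !den_updv_fresh in IH1 by auto. exact IH1.
Qed.

End Soundness.

Lemma prov_sem_conseq B Oth om (Gamma : term B Oth -> Prop) t :
  prov om Gamma t -> sem_conseq om Gamma t.
Proof.
  intros [G [HG D]] M HM s u Hu. apply (soundness D HM).
  intros; apply Hu, HG; auto.
Qed.

Section TermAlgebra.
Variables B Oth : Type.
Notation term := (term B Oth).

Definition conv_class : Type := {P : term -> Prop | exists t, P = beq t}.

Definition cls (t : term) : conv_class := exist _ (beq t) (ex_intro _ t eq_refl).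

Definition rep (P : conv_class) : term :=
  proj1_sig (constructive_indefinite_description _ (proj2_sig P)).

Lemma cls_rep P : cls (rep P) = P.
Proof.
  apply eq_sig_hprop; [intros; apply proof_irrelevance|]. simpl.
  unfold rep. destruct (constructive_indefinite_description _ _). simpl. auto.
Qed.

Lemma cls_surj P : exists t, P = cls t.
Proof. exists (rep P). symmetry; apply cls_rep. Qed.

Lemma cls_eq a b : beq a b -> cls a = cls b.
Proof.
  intros H. apply eq_sig_hprop; [intros; apply proof_irrelevance|]. simpl.
  apply functional_extensionality. intros x. apply propositional_extensionality.
  split; intros H'.
  - apply rst_trans with a; auto. apply rst_sym; auto.
  - apply rst_trans with b; auto.
Qed.

Lemma cls_inj a b : cls a = cls b -> beq a b.
Proof.
  intros H. assert (E : beq a = beq b) by exact (f_equal (@proj1_sig _ _) H).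
  rewrite E. apply rst_refl.
Qed.

Lemma rep_cls t : beq (rep (cls t)) t.
Proof. apply cls_inj. rewrite cls_rep. reflexivity. Qed.

Definition capp (P1 P2 : conv_class) : conv_class := cls (App (rep P1) (rep P2)).

Lemma capp_cls a b : capp (cls a) (cls b) = cls (App a b).
Proof. apply cls_eq. apply beq_app; apply rep_cls. Qed.

Definition tS : term :=
  Lam (Lam (Lam (App (App (Var 2) (Var 0)) (App (Var 1) (Var 0))))).

Lemma capp_S X Y Z :
  capp (capp (capp (cls tS) X) Y) Z = capp (capp X Z) (capp Y Z).
Proof.
  destruct (cls_surj X) as [x ->]. destruct (cls_surj Y) as [y ->].
  destruct (cls_surj Z) as [z ->]. rewrite !capp_cls. apply cls_eq.
  eapply rst_trans.
  { apply beq_app; [|apply rst_refl]. apply beq_app; [|apply rst_refl].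
    apply beq_beta. }
  simpl. eapply rst_trans.
  { apply beq_app; [|apply rst_refl]. apply beq_beta. }
  simpl. eapply rst_trans; [apply beq_beta|]. simpl.
  rewrite !sub_ren, !sub_id, sub_sub.
  replace (sub _ x) with x; [apply rst_refl|].
  rewrite <- (sub_id x) at 1. apply sub_ext. reflexivity.
Qed.

Lemma capp_K X Y : capp (capp (cls tK) X) Y = X.
Proof.
  destruct (cls_surj X) as [x ->]. destruct (cls_surj Y) as [y ->].
  rewrite !capp_cls. apply cls_eq.
  eapply rst_trans.
  { apply beq_app; [|apply rst_refl]. apply beq_beta. }
  simpl. eapply rst_trans; [apply beq_beta|]. simpl.
  rewrite sub_ren, sub_id. apply rst_refl.
Qed.

Definition term_algebra : comb_alg :=
  {| ca_car := conv_class; ca_app := capp; ca_S := cls tS; ca_K := cls tK;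
     ca_Sax := capp_S; ca_Kax := capp_K |}.

(* Extensionality of the term algebra is the eta rule: apply both sides to a
   fresh variable and abstract it again. *)
Lemma term_algebra_ext : extensional term_algebra.
Proof.
  intros M1 M2 H. destruct (cls_surj M1) as [m1 ->].
  destruct (cls_surj M2) as [m2 ->].
  destruct (fresh_var (m1 :: m2 :: nil)) as [v Hv].
  specialize (H (cls (Var v))). simpl in H. rewrite !capp_cls in H.
  apply cls_inj in H. apply cls_eq.
  set (sg := fun n => if Nat.eqb n v then @Var B Oth 0 else Var (S n)).
  assert (E : forall m, ~ occurs v m -> sub sg m = ren S m).
  { intros m Hm. rewrite ren_as_sub. apply sub_occ. intros n Hn. unfold sg.
    destruct (Nat.eqb_spec n v); subst; tauto. }
  apply (beq_sub sg), beq_lam in H. simpl in H.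
  rewrite !E in H by (apply Hv; simpl; auto).
  unfold sg in H. rewrite Nat.eqb_refl in H.
  eapply rst_trans; [apply rst_sym, rst_step, step_eta|].
  eapply rst_trans; [apply H|]. apply rst_step, step_eta.
Qed.

End TermAlgebra.

Section CanonicalModel.
Variables B Oth : Type.
Notation term := (term B Oth).
Variable om : bool.

(* A set of terms is sparse when unboundedly many variables are fresh for
   it; this is what makes eigenvariables available. *)
Definition sparse (P : term -> Prop) : Prop :=
  forall n, exists v, n <= v /\ forall t, P t -> ~ occurs v t.

Record state : Type :=
  mkstate { theory : term -> Prop; theory_sparse : sparse theory }.

Definition state_le (s1 s2 : state) : Prop :=
  forall t, theory s1 t -> theory s2 t.

Lemma state_le_antisym s1 s2 : state_le s1 s2 -> state_le s2 s1 -> s1 = s2.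
Proof.
  destruct s1 as [P1 H1], s2 as [P2 H2]; unfold state_le; simpl; intros Ha Hb.
  assert (P1 = P2) as <-.
  { apply functional_extensionality; intros x.
    apply propositional_extensionality; split; auto. }
  f_equal. apply proof_irrelevance.
Qed.

Lemma sparse_add P (a : term) : sparse P -> sparse (fun t => P t \/ t = a).
Proof.
  intros HP n. destruct (HP (max n (bound a))) as [v [Hv Hfresh]].
  exists v. split; [lia|]. intros t [Ht| ->]; auto.
  apply (fresh_above (a :: nil)); simpl; auto. lia.
Qed.

Definition extend (s : state) (a : term) : state :=
  mkstate (sparse_add a (theory_sparse s)).

Lemma extend_le s a : state_le s (extend s a).
Proof. intros t Ht. simpl. auto. Qed.

Definition cforces (X : conv_class B Oth) (s : state) : Prop :=
  prov om (theory s) (rep X).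

Lemma cforces_up X s s' : state_le s s' -> cforces X s -> cforces X s'.
Proof. intros H [G [HG D]]. exists G; split; auto. Qed.

Definition canonical : premodel B Oth :=
  @Build_premodel B Oth state state_le (fun s t H => H)
    (fun s1 s2 s3 H1 H2 t H => H2 t (H1 t H)) state_le_antisym
    (term_algebra B Oth) (@term_algebra_ext B Oth) (fun c => cls (Cst c))
    cforces cforces_up.

Lemma app_canonical a b :
  ca_app (pm_alg canonical) (cls a) (cls b) = cls (App a b).
Proof. apply capp_cls. Qed.

Lemma vs_canonical t s : vs canonical (cls t) s <-> prov om (theory s) t.
Proof.
  unfold vs, cforces; simpl.
  split; intros [G [HG D]]; exists G; split; auto;
    eapply d_Eq; eauto; [|apply rst_sym]; apply rep_cls.
Qed.

Lemma den_canonical (t : term) (u : nat -> pm_alg canonical) sg :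
  (forall n, u n = cls (sg n)) -> den canonical t u = cls (sub sg t).
Proof.
  revert u sg; induction t; intros u sg Hu.
  - apply Hu.
  - reflexivity.
  - rewrite den_app, (IHt1 u sg), (IHt2 u sg) by auto. apply app_canonical.
  - apply den_lam_ext. intros d. destruct (cls_surj d) as [r ->].
    rewrite app_canonical, (IHt _ (scons r sg)) by (intros [|n]; simpl; auto).
    apply cls_eq. eapply rst_trans; [apply beq_beta|]. rewrite sub_sub.
    replace (sub (scons r sg) t) with
      (sub (fun n => sub (scons r Var) (up sg n)) t); [apply rst_refl|].
    apply sub_ext. intros [|n]; simpl; auto. rewrite sub_ren, sub_id. reflexivity.
Qed.

Lemma vH_canonical : vH canonical = cls tH.
Proof. unfold vH. rewrite (den_canonical tH _ (fun _ => tK)); reflexivity. Qed.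

Lemma vF_canonical : vF canonical = cls tF.
Proof. unfold vF. rewrite (den_canonical tF _ (fun _ => tK)); reflexivity. Qed.

Lemma prov_ax P (t : term) : P t -> prov om P t.
Proof.
  intros Ht. exists (t :: nil). split; [intros t' [<-|[]]; auto|].
  apply d_ax; simpl; auto.
Qed.

Lemma prov_both P (a b : term) : prov om P a -> prov om P b ->
  exists G, (forall t, In t G -> P t) /\ deriv om G a /\ deriv om G b.
Proof.
  intros [G1 [HG1 D1]] [G2 [HG2 D2]]. exists (G1 ++ G2). split; [|split].
  - intros t Ht; apply in_app_or in Ht; destruct Ht; auto.
  - apply deriv_weak with G1; auto. apply incl_appl, incl_refl.
  - apply deriv_weak with G2; auto. apply incl_appr, incl_refl.
Qed.

Lemma split_hyps (P : term -> Prop) a (G : list term) :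
  (forall t, In t G -> P t \/ t = a) ->
  exists G0, (forall t, In t G0 -> P t) /\ incl G (a :: G0).
Proof.
  induction G as [|b G IH]; intros H.
  - exists nil. split; [simpl; tauto|intros x []].
  - destruct IH as [G0 [H1 H2]]; [intros; apply H; simpl; auto|].
    destruct (H b (or_introl eq_refl)) as [Hb|<-].
    + exists (b :: G0). split.
      * intros t [<-|Ht]; auto.
      * intros x [<-|Hx]; simpl; auto. apply H2 in Hx. destruct Hx; simpl; auto.
    + exists G0. split; auto. intros x [<-|Hx]; simpl; auto. apply H2, Hx.
Qed.

(* The canonical counterpart of the eigenvariable rules: if every instance
   of the premise is derivable once the hypothesis [x v] is adjoined, the
   conclusion is derivable, by a fresh v supplied by sparseness. *)
Lemma prov_eigen_rule s (x y concl : term) (prem : nat -> term) :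
  (forall G v, (forall t, In t G -> ~ occurs v t) ->
     ~ occurs v x -> ~ occurs v y ->
     deriv om (App x (Var v) :: G) (prem v) -> deriv om G (App tL x) ->
     deriv om G concl) ->
  (forall v, prov om (theory (extend s (App x (Var v)))) (prem v)) ->
  prov om (theory s) (App tL x) -> prov om (theory s) concl.
Proof.
  intros Hrule Hprem [G1 [HG1 D1]].
  destruct (theory_sparse s (lbound (x :: y :: nil))) as [v [Hv Hfresh]].
  destruct (Hprem v) as [G2 [HG2 D2]].
  destruct (@split_hyps (theory s) (App x (Var v)) G2 HG2) as [G0 [HG0 Hincl]].
  assert (HG : forall t, In t (G0 ++ G1) -> theory s t).
  { intros t Ht; apply in_app_or in Ht; destruct Ht; auto. }
  exists (G0 ++ G1). split; auto.
  apply (Hrule _ v).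
  - intros t Ht. apply Hfresh, HG, Ht.
  - apply (fresh_above _ Hv); simpl; auto.
  - apply (fresh_above _ Hv); simpl; auto.
  - apply deriv_weak with G2; auto. intros z Hz. apply Hincl in Hz.
    destruct Hz as [<-|Hz]; simpl; auto using in_or_app.
  - apply deriv_weak with G1; auto. intros z Hz. simpl. auto using in_or_app.
Qed.

Lemma extend_instance s (x : term) v :
  vs canonical (ca_app (pm_alg canonical) (cls x) (cls (Var v)))
     (extend s (App x (Var v))).
Proof. rewrite app_canonical. apply vs_canonical, prov_ax. simpl; auto. Qed.

Lemma canonical_is_model : is_model canonical om.
Proof.
  unfold is_model. rewrite vH_canonical, vF_canonical.
  change (vXi canonical) with (cls (@tXi B Oth)).
  change (vL canonical) with (cls (@tL B Oth)).
  split; [|split; [|split; [|split; [|split; [|split]]]]].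
  - intros X Y s HX HI.
    destruct (cls_surj X) as [x ->]. destruct (cls_surj Y) as [y ->].
    rewrite !app_canonical, !vs_canonical in *.
    apply prov_eigen_rule with (x := x) (y := y)
      (prem := fun v => App y (Var v)); auto.
    + intros G v HG Hx Hy D1 D2. apply d_Xii with v; auto.
    + intros v. rewrite <- vs_canonical, <- app_canonical.
      apply HI; [apply extend_le|apply extend_instance].
  - intros X Y s HXY Z HZ.
    destruct (cls_surj X) as [x ->]. destruct (cls_surj Y) as [y ->].
    destruct (cls_surj Z) as [z ->].
    rewrite !app_canonical, !vs_canonical in *.
    destruct (prov_both HXY HZ) as [G [HG [D1 D2]]].
    exists G. split; auto. eapply d_Xie; eauto.
  - intros X Y s HX HI.
    destruct (cls_surj X) as [x ->]. destruct (cls_surj Y) as [y ->].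
    rewrite !app_canonical, !vs_canonical in *.
    apply prov_eigen_rule with (x := x) (y := y)
      (prem := fun v => App tH (App y (Var v))); auto.
    + intros G v HG Hx Hy D1 D2. apply d_XiH with v; auto.
    + intros v. rewrite <- vs_canonical, <- !app_canonical.
      apply HI; [apply extend_le|apply extend_instance].
  - intros Hom X Y s HX HI.
    destruct (cls_surj X) as [x ->]. destruct (cls_surj Y) as [y ->].
    rewrite !app_canonical, !vs_canonical in *.
    apply prov_eigen_rule with (x := x) (y := y)
      (prem := fun _ => App tL y); auto.
    + intros G v HG Hx Hy D1 D2. apply d_FL with v; auto.
    + intros v. rewrite <- vs_canonical.
      apply HI; [apply extend_le|eexists; apply extend_instance].
  - intros X s HX. destruct (cls_surj X) as [x ->].
    rewrite !app_canonical, !vs_canonical in *. destruct HX as [G [HG D]].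
    exists G; split; auto. apply d_Hi; auto.
  - intros s. rewrite app_canonical, vs_canonical. exists nil.
    split; [intros t []|]. apply d_LH.
  - intros s tau. change (vA canonical tau) with (cls (@tA B Oth tau)).
    rewrite app_canonical, vs_canonical. exists nil.
    split; [intros t []|]. apply d_LA.
Qed.

End CanonicalModel.

Section Completeness.
Variables B Oth : Type.
Notation term := (term B Oth).

Definition dbl (n : nat) : nat := 2 * n.

(* Gamma renamed into the even variables: a sparse copy of Gamma. *)
Definition even_copy (Gamma : term -> Prop) (t : term) : Prop :=
  exists t0, Gamma t0 /\ t = ren dbl t0.

Lemma even_copy_sparse Gamma : sparse (even_copy Gamma).
Proof.
  intros n. exists (S (dbl n)). split; [unfold dbl; lia|].
  intros t [t0 [_ ->]] Ho. apply occurs_ren in Ho.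
  destruct Ho as [m [_ E]]. unfold dbl in E. lia.
Qed.

Lemma prov_even_copy om Gamma (t : term) :
  prov om (even_copy Gamma) (ren dbl t) -> prov om Gamma t.
Proof.
  assert (Hcancel : forall x : term, ren Nat.div2 (ren dbl x) = x).
  { intros x. apply ren_cancel. intros n. apply Nat.div2_double. }
  intros [G [HG D]]. exists (map (ren Nat.div2) G). split.
  - intros z Hz. apply in_map_iff in Hz. destruct Hz as [g [<- Hg]].
    destruct (HG g Hg) as [t0 [Ht0 ->]]. rewrite Hcancel. exact Ht0.
  - rewrite <- (Hcancel t). apply deriv_ren, D.
Qed.

(* Completeness: refute in the canonical model, at the state holding the
   even copy of Gamma, under the valuation n |-> [Var (2n)]. *)
Lemma sem_conseq_prov om Gamma (t : term) :
  sem_conseq om Gamma t -> prov om Gamma t.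
Proof.
  intros Hsem.
  set (s0 := mkstate (even_copy_sparse Gamma)).
  set (u := fun n => cls (@Var B Oth (dbl n)) : pm_alg (canonical B Oth om)).
  assert (Hden : forall t', den (canonical B Oth om) t' u = cls (ren dbl t')).
  { intros t'. rewrite ren_as_sub. apply den_canonical. reflexivity. }
  apply prov_even_copy. change (prov om (theory s0) (ren dbl t)).
  rewrite <- vs_canonical, <- Hden.
  apply (Hsem _ (canonical_is_model B Oth om) s0 u).
  intros t' Ht'. unfold forces. rewrite Hden.
  apply vs_canonical, prov_ax. exists t'; auto.
Qed.

End Completeness.

(* Kripke completeness. *)
Theorem mainTheorem5 (B Oth : Type) (HB : Finite B) (omega : bool)
  (Gamma : term B Oth -> Prop) (t : term B Oth) :
  sem_conseq omega Gamma t <-> prov omega Gamma t.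
Proof.
  split.
  - apply sem_conseq_prov.
  - apply prov_sem_conseq.
Qed.
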